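(* The function $q$ satisfies $q(\alpha)\to0$ as $\alpha\to0^+$ and as $\alpha\to(\pi/2)^-$, and there is a unique $\alpha_0^*\in(0,\pi/2)$ (numerically $\alpha_0^*\approx1.391$) such that $q$ is strictly increasing on $(0,\alpha_0^*]$ and strictly decreasing on $[\alpha_0^*,\pi/2)$. Consequently, the Steiner drop system has exactly two equilibria when $\alpha_0\neq\alpha_0^*$ and exactly one equilibrium when $\alpha_0=\alpha_0^*$; when $\alpha_0<\alpha_0^*$ the equilibrium $(0,0,\tfrac13\sqrt{\tan\alpha_0},0)$ is the one with the smaller $y$-coordinate, and when $\alpha_0>\alpha_0^*$ it is the one with the larger $y$-coordinate.
   Context: Let $q(\alpha)=\dfrac{2\sin^2\alpha\,\sqrt{\tan\alpha}}{4+\sec\alpha}$ for $\alpha\in(0,\pi/2)$. Fix $\alpha_0\in(0,\pi/2)$. For $x\in\mathbb{R}$, $y>0$ define $a(x,y)=\sqrt{\left(\tfrac{1}{3y}-3x\right)^2+9y^2}$, $b(x,y)=\sqrt{\left(\tfrac{1}{3y}+3x\right)^2+9y^2}$, $f(x,y)=\frac{1}{a}\left(\frac{1}{3y}-3x\right)-\frac{1}{b}\left(\frac{1}{3y}+3x\right)$, $h(x,y)=-3y\left(\frac1a+\frac1b\right)+\frac{q(\alpha_0)}{3y}\left(\frac{2(a+b)}{3y}+ab\right)$. The Steiner drop system is the ODE on $\{(x,w,y,z)\in\mathbb{R}^4: y>0\}$: $\dot x=w,\ \dot w=f(x,y),\ \dot y=z,\ \dot z=h(x,y)$. *)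

From Stdlib Require Import Reals Lra.
Open Scope R_scope.

Definition q (al : R) : R :=
  2 * (sin al)^2 * sqrt (tan al) / (4 + / cos al).

Definition sa (x y : R) : R := sqrt ((/(3*y) - 3*x)^2 + 9*y^2).
Definition sb (x y : R) : R := sqrt ((/(3*y) + 3*x)^2 + 9*y^2).

Definition sf (x y : R) : R :=
  / sa x y * (/(3*y) - 3*x) - / sb x y * (/(3*y) + 3*x).

Definition sh (alpha0 x y : R) : R :=
  - 3*y * (/ sa x y + / sb x y)
  + q alpha0 / (3*y) * (2 * (sa x y + sb x y) / (3*y) + sa x y * sb x y).

Definition pt : Type := (R * R * R * R)%type.

Definition ycoord (p : pt) : R := let '(_, _, y, _) := p in y.

(* Equilibrium of the Steiner drop system with parameter alpha0:
   a point of the phase space {y > 0} where the vector field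
   (w, f(x,y), z, h(x,y)) vanishes. *)
Definition equilibrium (alpha0 : R) (p : pt) : Prop :=
  let '(x, w, y, z) := p in
  0 < y /\ w = 0 /\ sf x y = 0 /\ z = 0 /\ sh alpha0 x y = 0.

Definition exactly_one_equilibrium (alpha0 : R) : Prop :=
  exists p, equilibrium alpha0 p /\ forall p', equilibrium alpha0 p' -> p' = p.

Definition exactly_two_equilibria (alpha0 : R) : Prop :=
  exists p1 p2, p1 <> p2 /\ equilibrium alpha0 p1 /\ equilibrium alpha0 p2 /\
    forall p, equilibrium alpha0 p -> p = p1 \/ p = p2.

Definition unimodal_at (s : R) : Prop :=
  (forall a b, 0 < a -> a < b -> b <= s -> q a < q b) /\
  (forall a b, s <= a -> a < b -> b < PI/2 -> q b < q a).

Definition in_open_quarter (a : R) : Prop := 0 < a < PI/2.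

From Stdlib Require Import Reals Lra Psatz.
From Coquelicot Require Import Coquelicot.
Open Scope R_scope.

(* Everything is reduced to one explicit rational function.  With c = sec a,
   q(a)^4 = 16 G(c) where G(c) = (c^2-1)^5 / (c^8 (4+c)^4); the derivative of
   G has the sign of the cubic Pcub(c) = -c^3 + 4c^2 + 6c + 16, which has a
   single root cstar in [11/2, 6] beyond 1.  Hence G rises on [1, cstar] from
   G(1) = 0 and falls on [cstar, +oo) back towards 0: a "peak profile".
   - A general section shows that a peak profile attains the peak value once
     and every other positive level exactly twice, once on each side.
   - Since sec is increasing, q is unimodal with peak alpha_star = arcsec cstar,
     and the bound q^2 <= min (sin a, 4 cos a) gives both limits of q.
   - An equilibrium must have x = w = z = 0, and on this axis h(0, y) = 0 is
     equivalent to G(secy y) = G(sec a0), where secy y = sqrt (1 + (3y)^4) is an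
     increasing bijection (0, +oo) -> (1, +oo) with secy (sqrt (tan a) / 3) =
     sec a.  So equilibria correspond to the level set of G through sec a0,
     and the level-set section counts them and orders their heights. *)

Record peak_profile (f : R -> R) (l m : R) : Prop := {
  peak_inside : l < m;
  profile_rises : forall a b, l <= a -> a < b -> b <= m -> f a < f b;
  profile_falls : forall a b, m <= a -> a < b -> f b < f a;
  profile_cont : forall c, l <= c -> continuity_pt f c;
  profile_base_min : forall c, l < c -> f l < f c;
  profile_tail : forall v, f l < v -> exists M, m <= M /\ f M < v }.

Arguments peak_inside {f l m}.
Arguments profile_rises {f l m}.
Arguments profile_falls {f l m}.
Arguments profile_cont {f l m}.
Arguments profile_base_min {f l m}.
Arguments profile_tail {f l m}.

Section LevelSets.
Context {f : R -> R} {l m : R} (P : peak_profile f l m).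

Lemma level_left_inj a b : l <= a <= m -> l <= b <= m -> f a = f b -> a = b.
Proof.
  intros Ha Hb E. destruct (Rtotal_order a b) as [H|[H|H]]; auto.
  - pose proof (profile_rises P a b ltac:(lra) H ltac:(lra)); lra.
  - pose proof (profile_rises P b a ltac:(lra) H ltac:(lra)); lra.
Qed.

Lemma level_right_inj a b : m <= a -> m <= b -> f a = f b -> a = b.
Proof.
  intros Ha Hb E. destruct (Rtotal_order a b) as [H|[H|H]]; auto.
  - pose proof (profile_falls P a b ltac:(lra) H); lra.
  - pose proof (profile_falls P b a ltac:(lra) H); lra.
Qed.

Lemma level_at_peak c : l <= c -> f c = f m -> c = m.
Proof.
  intros Hc E. pose proof (peak_inside P).
  destruct (Rle_lt_dec c m).
  - apply level_left_inj; auto; lra.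
  - apply level_right_inj; auto; lra.
Qed.

Lemma level_two_sides c0 c1 c : l <= c0 <= m -> m <= c1 -> f c0 = f c1 ->
  l <= c -> f c = f c0 -> c = c0 \/ c = c1.
Proof.
  intros H0 H1 E01 Hc E. destruct (Rle_lt_dec c m).
  - left. apply level_left_inj; auto; lra.
  - right. apply level_right_inj; lra.
Qed.

Lemma level_partner c0 : l < c0 -> c0 <> m ->
  exists c1, l < c1 /\ f c1 = f c0 /\ (c0 < m -> m < c1) /\ (m < c0 -> c1 < m).
Proof.
  intros Hc0 Hne. pose proof (peak_inside P) as Hlm.
  assert (Hcont : forall k, forall c, l <= c -> continuity_pt (fun x => f x - k) c).
  { intros k c Hc. apply continuity_pt_minus; [apply (profile_cont P); lra|].
    apply continuity_pt_const. intros u v; reflexivity. }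
  destruct (Rtotal_order c0 m) as [Hl|[He|Hg]]; [|contradiction|].
  - pose proof (profile_rises P c0 m ltac:(lra) Hl ltac:(lra)) as Hpeak.
    destruct (profile_tail P (f c0) (profile_base_min P c0 Hc0)) as [M [HM HfM]].
    assert (HmM : m < M) by (destruct HM as [HM|HM]; [exact HM| subst; lra]).
    destruct (Ranalysis5.IVT_interv (fun x => - (f x - f c0)) m M) as [c [Hc E]].
    + intros a Ha. apply continuity_pt_opp. apply Hcont; lra.
    + exact HmM.
    + lra.
    + lra.
    + exists c. assert (c <> m) by (intro; subst; lra). lra.
  - pose proof (profile_falls P m c0 ltac:(lra) Hg) as Hpeak.
    pose proof (profile_base_min P c0 Hc0) as Hbase.
    destruct (Ranalysis5.IVT_interv (fun x => f x - f c0) l m) as [c [Hc E]].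
    + intros a Ha. apply Hcont; lra.
    + exact Hlm.
    + lra.
    + lra.
    + exists c. assert (c <> l) by (intro; subst; lra).
      assert (c <> m) by (intro; subst; lra). lra.
Qed.

End LevelSets.

(* In the variable c = sec alpha, q(alpha)^4 = 16 G(c) (see [q_pow4] below).
   The sign of G' is that of the cubic Pcub. *)
Definition Pcub (c : R) : R := -c^3 + 4*c^2 + 6*c + 16.
Definition G (c : R) : R := (c^2-1)^5 / (c^8 * (4+c)^4).

Lemma G_derivative c : 0 < c ->
  derivable_pt_lim G c (2*(c^2-1)^4 / (c^9 * (4+c)^5) * Pcub c).
Proof.
  intro Hc. apply is_derive_Reals. unfold G. auto_derive.
  - change (c^8 * (4+c)^4 <> 0). apply Rgt_not_eq.
    apply Rmult_lt_0_compat; apply pow_lt; lra.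
  - unfold Pcub. field. lra.
Qed.

Lemma G_cont c : 0 < c -> continuity_pt G c.
Proof.
  intro Hc. apply derivable_continuous_pt. eexists. now apply G_derivative.
Qed.

Lemma Pcub_root : {c | 11/2 <= c <= 6 /\ Pcub c = 0}.
Proof.
  destruct (IVT_cor Pcub (11/2) 6) as [c Hc].
  - unfold Pcub. reg.
  - lra.
  - unfold Pcub. simpl. lra.
  - exists c. exact Hc.
Qed.

Definition cstar : R := proj1_sig Pcub_root.

Lemma cstar_spec : 11/2 <= cstar <= 6 /\ Pcub cstar = 0.
Proof. exact (proj2_sig Pcub_root). Qed.

(* For c >= 1, Pcub(c) = (c - cstar) times a negative quadratic, so cstar is
   the only root there and Pcub changes sign from + to - at cstar. *)
Lemma Pcub_sign c : 1 <= c -> (c < cstar -> 0 < Pcub c) /\ (cstar < c -> Pcub c < 0).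
Proof.
  intro Hc. destruct cstar_spec as [Hcs Hp].
  assert (E : Pcub c = (c - cstar) * (- (c*c + c*cstar + cstar*cstar) + 4*(c + cstar) + 6)).
  { rewrite <- (Rminus_0_r (Pcub c)), <- Hp. unfold Pcub. ring. }
  assert (Q : - (c*c + c*cstar + cstar*cstar) + 4*(c + cstar) + 6 < 0) by nra.
  rewrite E. split; intro; nra.
Qed.

Lemma G_mvt a b : 1 <= a -> a < b ->
  exists x k, a < x < b /\ 0 < k /\ G b - G a = k * Pcub x.
Proof.
  intros Ha Hab.
  destruct (MVT_cor2 G (fun c => 2*(c^2-1)^4 / (c^9 * (4+c)^5) * Pcub c) a b Hab)
    as [x [E Hx]].
  { intros c Hc. apply G_derivative. lra. }
  exists x, (2*(x^2-1)^4 / (x^9 * (4+x)^5) * (b - a)).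
  split; [exact Hx|]. split; [|rewrite E; ring].
  apply Rmult_lt_0_compat; [|lra]. apply Rdiv_lt_0_compat.
  - apply Rmult_lt_0_compat; [lra|]. apply pow_lt. nra.
  - apply Rmult_lt_0_compat; apply pow_lt; lra.
Qed.

Lemma G_incr a b : 1 <= a -> a < b -> b <= cstar -> G a < G b.
Proof.
  intros Ha Hab Hb. destruct (G_mvt a b Ha Hab) as [x [k [Hx [Hk E]]]].
  destruct (Pcub_sign x ltac:(lra)) as [Hpos _].
  pose proof (Hpos ltac:(lra)). nra.
Qed.

Lemma G_decr a b : cstar <= a -> a < b -> G b < G a.
Proof.
  intros Ha Hab. pose proof cstar_spec.
  destruct (G_mvt a b ltac:(lra) Hab) as [x [k [Hx [Hk E]]]].
  destruct (Pcub_sign x ltac:(lra)) as [_ Hneg].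
  pose proof (Hneg ltac:(lra)). nra.
Qed.

Lemma G_1 : G 1 = 0.
Proof. unfold G. simpl. field. Qed.

Lemma G_pos c : 1 < c -> 0 < G c.
Proof.
  intro. unfold G. apply Rdiv_lt_0_compat; [apply pow_lt; nra|].
  apply Rmult_lt_0_compat; apply pow_lt; lra.
Qed.

Lemma G_le_inv c : 1 <= c -> G c <= / c.
Proof.
  intro Hc. unfold G.
  assert (H1 : (c^2-1)^5 <= c^10).
  { replace (c^10) with ((c^2)^5) by ring. apply pow_incr. nra. }
  assert (H2 : c^12 <= c^8 * (4+c)^4).
  { replace (c^12) with (c^8 * c^4) by ring. apply Rmult_le_compat_l.
    - apply pow_le; lra.
    - apply pow_incr; lra. }
  assert (H0 : 0 < c^12) by (apply pow_lt; lra).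
  apply Rle_trans with (c^10 / c^12).
  - unfold Rdiv. apply Rmult_le_compat; auto.
    + apply pow_le. nra.
    + left. apply Rinv_0_lt_compat. apply Rmult_lt_0_compat; apply pow_lt; lra.
    + apply Rinv_le_contravar; auto.
  - replace (c^10/c^12) with (/c * /c) by (field; lra).
    assert (0 < /c) by (apply Rinv_0_lt_compat; lra).
    assert (/c <= 1) by (rewrite <- Rinv_1; apply Rinv_le_contravar; lra).
    nra.
Qed.

Lemma G_profile : peak_profile G 1 cstar.
Proof.
  pose proof cstar_spec as [Hcs _]. split.
  - lra.
  - intros a b Ha Hab Hb. exact (G_incr a b Ha Hab Hb).
  - exact G_decr.
  - intros c Hc. apply G_cont. lra.
  - intros c Hc. rewrite G_1. exact (G_pos c Hc).
  - intros v Hv. rewrite G_1 in Hv. exists (cstar + / v + 1). split.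
    + assert (0 < / v) by (apply Rinv_0_lt_compat; lra). lra.
    + apply Rle_lt_trans with (/ (cstar + / v + 1)).
      * apply G_le_inv. assert (0 < / v) by (apply Rinv_0_lt_compat; lra). lra.
      * rewrite <- (Rinv_inv v) at 2. apply Rinv_lt_contravar.
        -- assert (0 < / v) by (apply Rinv_0_lt_compat; lra). nra.
        -- lra.
Qed.

Lemma pow_lt_compat u v n : 0 <= u -> u < v -> u ^ S n < v ^ S n.
Proof.
  intros Hu Huv. induction n as [|n IH]; [simpl; lra|].
  change (u * u ^ S n < v * v ^ S n).
  pose proof (pow_le u (S n) Hu). nra.
Qed.

Lemma pow_inj u v n : 0 <= u -> 0 <= v -> u ^ S n = v ^ S n -> u = v.
Proof.
  intros Hu Hv E. destruct (Rtotal_order u v) as [H|[H|H]]; auto.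
  - pose proof (pow_lt_compat u v n Hu H); lra.
  - pose proof (pow_lt_compat v u n Hv H); lra.
Qed.

Lemma trig_quarter a : 0 < a < PI/2 -> 0 < cos a < 1 /\ 0 < sin a.
Proof.
  intro H. pose proof PI_RGT_0. split; [split|].
  - apply cos_gt_0; lra.
  - rewrite <- cos_0. apply cos_decreasing_1; lra.
  - apply sin_gt_0; lra.
Qed.

Lemma sin2_quarter a : sin a ^ 2 = 1 - cos a ^ 2.
Proof. pose proof (sin2 a) as E. unfold Rsqr in E. simpl. lra. Qed.

Lemma sec_gt1 a : 0 < a < PI/2 -> 1 < / cos a.
Proof.
  intro H. destruct (trig_quarter a H) as [[Hc Hc1] _].
  rewrite <- Rinv_1. apply Rinv_lt_contravar; lra.
Qed.

Lemma sec_lt a b : 0 < a -> a < b -> b < PI/2 -> / cos a < / cos b.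
Proof.
  intros. pose proof PI_RGT_0.
  destruct (trig_quarter a ltac:(lra)) as [[Ha _] _].
  destruct (trig_quarter b ltac:(lra)) as [[Hb _] _].
  apply Rinv_lt_contravar; [nra|]. apply cos_decreasing_1; lra.
Qed.

Lemma sec_le a b : 0 < a -> a <= b -> b < PI/2 -> / cos a <= / cos b.
Proof. intros Ha [Hab|Hab] Hb; [left; apply sec_lt; auto | subst; lra]. Qed.

Lemma q_pos a : 0 < a < PI/2 -> 0 < q a.
Proof.
  intro H. destruct (trig_quarter a H) as [[Hc _] Hs].
  assert (0 < tan a) by (unfold tan; apply Rdiv_lt_0_compat; lra).
  assert (0 < / cos a) by (apply Rinv_0_lt_compat; lra).
  unfold q. apply Rdiv_lt_0_compat; [|lra]. apply Rmult_lt_0_compat.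
  - apply Rmult_lt_0_compat; [lra| apply pow_lt; lra].
  - apply sqrt_lt_R0. auto.
Qed.

Lemma q_sq a : 0 < a < PI/2 -> q a ^ 2 = 4 * sin a ^ 5 * cos a / (4 * cos a + 1) ^ 2.
Proof.
  intro H. destruct (trig_quarter a H) as [[Hc _] Hs].
  assert (Ht : 0 <= tan a) by (unfold tan; left; apply Rdiv_lt_0_compat; lra).
  unfold q.
  replace ((2 * sin a ^ 2 * sqrt (tan a) / (4 + / cos a)) ^ 2) with
    (4 * sin a ^ 4 * (sqrt (tan a) * sqrt (tan a)) / (4 + / cos a) ^ 2) by (field; lra).
  rewrite (sqrt_sqrt _ Ht). unfold tan. field. lra.
Qed.

Lemma q_pow4 a : 0 < a < PI/2 -> q a ^ 4 = 16 * G (/ cos a).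
Proof.
  intro H. destruct (trig_quarter a H) as [[Hc _] _].
  replace (q a ^ 4) with ((q a ^ 2) ^ 2) by ring. rewrite (q_sq a H).
  replace ((4 * sin a ^ 5 * cos a / (4 * cos a + 1) ^ 2) ^ 2) with
    (16 * (sin a ^ 2) ^ 5 * cos a ^ 2 / (4 * cos a + 1) ^ 4) by (field; lra).
  rewrite sin2_quarter. unfold G. field. lra.
Qed.

Lemma q_lt_of_G a b : 0 < a < PI/2 -> 0 < b < PI/2 ->
  G (/ cos a) < G (/ cos b) -> q a < q b.
Proof.
  intros Ha Hb HG. pose proof (q_pow4 a Ha). pose proof (q_pow4 b Hb).
  pose proof (q_pos a Ha). pose proof (q_pos b Hb).
  destruct (Rlt_le_dec (q a) (q b)) as [|[Hlt|Heq]]; auto.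
  - pose proof (pow_lt_compat (q b) (q a) 3 ltac:(lra) Hlt). lra.
  - rewrite Heq in *. lra.
Qed.

Lemma q_sq_bounds a : 0 < a < PI/2 -> q a ^ 2 <= sin a /\ q a ^ 2 <= 4 * cos a.
Proof.
  intro H. destruct (trig_quarter a H) as [[Hc Hc1] Hs]. rewrite (q_sq a H).
  pose proof (SIN_bound a) as [_ Hs1].
  assert (Hd : 0 < (4 * cos a + 1) ^ 2) by (apply pow_lt; lra).
  assert (Hs4 : sin a ^ 4 <= 1) by (rewrite <- (pow1 4); apply pow_incr; lra).
  assert (Hs5 : 0 <= sin a ^ 5) by (apply pow_le; lra).
  split; apply Rle_div_l; auto.
  - replace (4 * sin a ^ 5 * cos a) with (sin a * (4 * cos a * sin a ^ 4)) by ring.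
    apply Rmult_le_compat_l; nra.
  - replace (4 * sin a ^ 5 * cos a) with (4 * cos a * (sin a ^ 4 * sin a)) by ring.
    assert (4 * cos a * (sin a ^ 4 * sin a) <= 4 * cos a * 1)
      by (apply Rmult_le_compat_l; nra).
    nra.
Qed.

Lemma limit_by_sq_bound (f h : R -> R) (D : R -> Prop) x0 :
  continuity_pt h x0 -> h x0 = 0 ->
  (forall x, D x -> 0 <= f x /\ f x ^ 2 <= h x) -> limit1_in f D 0 x0.
Proof.
  intros Hh Hh0 Hb eps Heps.
  destruct (Hh (eps * eps) ltac:(nra)) as [alp [Halp Hcl]].
  exists alp. split; [exact Halp|]. intros x [Hx Hd].
  destruct (Hb x Hx) as [Hf Hf2]. simpl. unfold R_dist.
  rewrite Rminus_0_r, Rabs_pos_eq by exact Hf.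
  destruct (Req_dec x0 x) as [E|Hne].
  - subst x. nra.
  - assert (Hclose : Rabs (h x - h x0) < eps * eps) by (apply (Hcl x); repeat split; auto).
    rewrite Hh0, Rminus_0_r in Hclose. pose proof (Rle_abs (h x)). nra.
Qed.

Lemma q_lim_0 : limit1_in q in_open_quarter 0 0.
Proof.
  apply (limit_by_sq_bound q sin); [apply continuity_sin | apply sin_0 |].
  intros x Hx. pose proof (q_pos x Hx). split; [lra|]. apply q_sq_bounds; auto.
Qed.

Lemma q_lim_PI2 : limit1_in q in_open_quarter 0 (PI/2).
Proof.
  apply (limit_by_sq_bound q (fun x => 4 * cos x)).
  - apply continuity_pt_scal. apply continuity_cos.
  - rewrite cos_PI2. ring.
  - intros x Hx. pose proof (q_pos x Hx). split; [lra|]. apply q_sq_bounds; auto.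
Qed.

Definition alpha_star : R := acos (/ cstar).

Lemma alpha_star_spec : 0 < alpha_star < PI/2 /\ / cos alpha_star = cstar.
Proof.
  destruct cstar_spec as [Hcs _].
  assert (Hinv : 0 < / cstar < 1).
  { split; [apply Rinv_0_lt_compat; lra|].
    rewrite <- Rinv_1. apply Rinv_lt_contravar; lra. }
  assert (Hcos : cos alpha_star = / cstar) by (apply cos_acos; lra).
  destruct (acos_bound_lt (/ cstar) ltac:(lra)) as [H0 Hpi].
  split; [split; [exact H0|]|].
  - destruct (Rlt_le_dec alpha_star (PI/2)) as [|Hge]; auto.
    pose proof (cos_le_0 alpha_star Hge ltac:(fold alpha_star in Hpi; lra)). lra.
  - rewrite Hcos. apply Rinv_inv.
Qed.

(* q rises on (0, alpha_star] and falls on [alpha_star, pi/2), because G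
   does so on the corresponding sec-intervals [1, cstar] and [cstar, +oo). *)
Lemma q_unimodal : unimodal_at alpha_star.
Proof.
  destruct alpha_star_spec as [Hs Ecs]. split.
  - intros a b Ha Hab Hb. apply q_lt_of_G; try lra.
    apply G_incr.
    + left. apply sec_gt1. lra.
    + apply sec_lt; lra.
    + rewrite <- Ecs. apply sec_le; lra.
  - intros a b Ha Hab Hb. apply q_lt_of_G; try lra.
    apply G_decr.
    + rewrite <- Ecs. apply sec_le; lra.
    + apply sec_lt; lra.
Qed.

Lemma unimodal_unique s s' : 0 < s < PI/2 -> 0 < s' < PI/2 ->
  unimodal_at s -> unimodal_at s' -> s' = s.
Proof.
  intros Hs Hs' [U1 U2] [V1 V2].
  destruct (Rtotal_order s' s) as [H|[H|H]]; auto.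
  - pose proof (V2 s' s ltac:(lra) H ltac:(lra)).
    pose proof (U1 s' s ltac:(lra) H ltac:(lra)). lra.
  - pose proof (U2 s s' ltac:(lra) H ltac:(lra)).
    pose proof (V1 s s' ltac:(lra) H ltac:(lra)). lra.
Qed.

(* On the axis x = 0 the drop of height y has sa = sb = secy y / (3y), where
   secy y = sqrt (1 + (3y)^4) is the secant of the contact angle of that
   drop: secy (sqrt (tan a) / 3) = sec a. *)
Definition secy (y : R) : R := sqrt (1 + (3*y)^4).

Lemma secy_sq y : secy y ^ 2 = 1 + (3*y)^4.
Proof.
  unfold secy. rewrite <- Rsqr_pow2. apply Rsqr_sqrt.
  pose proof (pow2_ge_0 ((3*y)^2)). replace ((3*y)^4) with (((3*y)^2)^2) by ring. lra.
Qed.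

Lemma secy_lt y1 y2 : 0 <= y1 -> y1 < y2 -> secy y1 < secy y2.
Proof.
  intros H1 H12. unfold secy.
  pose proof (pow_lt_compat (3*y1) (3*y2) 3 ltac:(lra) ltac:(lra)).
  pose proof (pow_le (3*y1) 4 ltac:(lra)).
  apply sqrt_lt_1; simpl in *; lra.
Qed.

Lemma secy_gt1 y : 0 < y -> 1 < secy y.
Proof.
  intro Hy.
  replace 1 with (secy 0)
    by (unfold secy; replace (1 + (3*0)^4) with 1 by ring; exact sqrt_1).
  apply secy_lt; lra.
Qed.

Lemma secy_lt_rev y1 y2 : 0 <= y1 -> 0 <= y2 -> secy y1 < secy y2 -> y1 < y2.
Proof.
  intros H1 H2 Hs. destruct (Rlt_le_dec y1 y2) as [|[Hlt|Heq]]; auto.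
  - pose proof (secy_lt y2 y1 H2 Hlt). lra.
  - subst. lra.
Qed.

Lemma secy_inj y1 y2 : 0 <= y1 -> 0 <= y2 -> secy y1 = secy y2 -> y1 = y2.
Proof.
  intros H1 H2 E. destruct (Rtotal_order y1 y2) as [H|[H|H]]; auto.
  - pose proof (secy_lt y1 y2 H1 H); lra.
  - pose proof (secy_lt y2 y1 H2 H); lra.
Qed.

Lemma secy_surj c : 1 < c -> exists y, 0 < y /\ secy y = c.
Proof.
  intro Hc. set (r := sqrt (sqrt (c^2 - 1))).
  assert (H0 : 0 < c^2 - 1) by nra.
  assert (H1 : 0 < sqrt (c^2 - 1)) by (apply sqrt_lt_R0; auto).
  assert (Hr : 0 < r) by (apply sqrt_lt_R0; auto).
  exists (r / 3). split; [lra|]. unfold secy.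
  replace ((3 * (r / 3))^4) with ((r * r) * (r * r)) by field.
  unfold r. rewrite !sqrt_sqrt by lra.
  replace (1 + (c^2 - 1)) with (c^2) by ring. apply sqrt_pow2. lra.
Qed.

Lemma secy_base a : 0 < a < PI/2 -> secy (sqrt (tan a) / 3) = / cos a.
Proof.
  intro H. destruct (trig_quarter a H) as [[Hc _] Hs].
  assert (Ht : 0 <= tan a) by (unfold tan; left; apply Rdiv_lt_0_compat; lra).
  unfold secy.
  replace ((3 * (sqrt (tan a) / 3))^4) with
    ((sqrt (tan a) * sqrt (tan a)) * (sqrt (tan a) * sqrt (tan a))) by field.
  rewrite sqrt_sqrt by lra.
  replace (1 + tan a * tan a) with ((/ cos a)^2).
  - apply sqrt_pow2. left. apply Rinv_0_lt_compat. lra.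
  - unfold tan. replace (sin a / cos a * (sin a / cos a)) with (sin a ^ 2 / cos a ^ 2)
      by (field; lra).
    rewrite sin2_quarter. field. lra.
Qed.

Lemma sf_zero x y : 0 < y -> sf x y = 0 -> x = 0.
Proof.
  intros Hy E. unfold sf, sa, sb in E.
  set (u := / (3*y) - 3*x) in *. set (v := / (3*y) + 3*x) in *.
  set (k := 9*y^2) in *.
  assert (Hk : 0 < k) by (unfold k; nra).
  assert (HA : 0 < u^2 + k) by nra. assert (HB : 0 < v^2 + k) by nra.
  pose proof (sqrt_lt_R0 _ HA) as A0. pose proof (sqrt_lt_R0 _ HB) as B0.
  pose proof (sqrt_sqrt _ (Rlt_le _ _ HA)) as A2.
  pose proof (sqrt_sqrt _ (Rlt_le _ _ HB)) as B2.
  set (A := sqrt (u^2+k)) in *. set (B := sqrt (v^2+k)) in *.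
  assert (E1 : u * B = v * A).
  { apply (f_equal (fun t => t * A * B)) in E.
    replace ((/ A * u - / B * v) * A * B) with (u * B - v * A) in E by (field; lra). lra. }
  assert (E2 : u * u = v * v).
  { assert (Hsq : u*u*(B*B) = v*v*(A*A)).
    { replace (u*u*(B*B)) with ((u*B)*(u*B)) by ring. rewrite E1. ring. }
    rewrite A2, B2 in Hsq. assert (Hz : k * (u*u - v*v) = 0) by nra.
    apply Rmult_integral in Hz. destruct Hz; lra. }
  assert (Euv : u = v).
  { assert (Hz : (u - v) * (u + v) = 0) by nra.
    apply Rmult_integral in Hz. destruct Hz as [|Hz]; [lra|].
    assert (Hz' : u * (A + B) = 0) by nra.
    apply Rmult_integral in Hz'. destruct Hz'; lra. }
  unfold u, v in Euv. lra.
Qed.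

Lemma sa_sb_axis y : 0 < y -> sa 0 y = secy y / (3*y) /\ sb 0 y = secy y / (3*y).
Proof.
  intro Hy. pose proof (secy_gt1 y Hy). pose proof (secy_sq y) as HC2.
  assert (E : (/ (3*y))^2 + 9*y^2 = (secy y / (3*y))^2).
  { replace ((secy y / (3*y))^2) with (secy y ^ 2 / (3*y)^2) by (field; lra).
    rewrite HC2. field. lra. }
  unfold sa, sb. rewrite Rmult_0_r, Rminus_0_r, Rplus_0_r, E.
  rewrite sqrt_pow2; [split; reflexivity|]. left. apply Rdiv_lt_0_compat; lra.
Qed.

(* On the axis, h = 0 says q(alpha0) equals the value g(y) singled out by the
   drop of height y; taking fourth powers this reads G(secy y) = G(sec alpha0). *)
Lemma sh_axis_zero a y : 0 < a < PI/2 -> 0 < y ->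
  (sh a 0 y = 0 <-> G (secy y) = G (/ cos a)).
Proof.
  intros Ha Hy. destruct (sa_sb_axis y Hy) as [E1 E2].
  pose proof (secy_gt1 y Hy). pose proof (secy_sq y) as HC2.
  set (C := secy y) in *. set (t := 3*y).
  set (g := 2 * t^5 / (C^2 * (4 + C))).
  assert (Ht : 0 < t) by (unfold t; lra).
  assert (Esh : sh a 0 y = (C * (4 + C) / t^3) * (q a - g)).
  { unfold sh. rewrite E1, E2. unfold g, t. field. lra. }
  assert (Hg : 0 < g).
  { unfold g. apply Rdiv_lt_0_compat.
    - apply Rmult_lt_0_compat; [lra| apply pow_lt; lra].
    - apply Rmult_lt_0_compat; [apply pow_lt|]; lra. }
  assert (Hg4 : g^4 = 16 * G C).
  { unfold g, G. replace (C^2 - 1) with (t^4) by (rewrite HC2; unfold t; ring).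
    field. lra. }
  assert (Hf : 0 < C * (4 + C) / t^3) by (apply Rdiv_lt_0_compat; [nra| apply pow_lt; lra]).
  pose proof (q_pow4 a Ha) as Hq4. pose proof (q_pos a Ha) as Hq.
  rewrite Esh. split; intro Hz.
  - apply Rmult_integral in Hz. destruct Hz as [Hz|Hz]; [lra|].
    replace (q a) with g in Hq4 by lra. lra.
  - assert (Eq : q a = g)
      by (apply (pow_inj _ _ 3); [lra | lra | rewrite Hq4, Hg4, Hz; reflexivity]).
    rewrite Eq. ring.
Qed.

Lemma equilibrium_iff a x w y z : 0 < a < PI/2 ->
  (equilibrium a (x, w, y, z) <->
   x = 0 /\ w = 0 /\ z = 0 /\ 0 < y /\ G (secy y) = G (/ cos a)).
Proof.
  intro Ha. unfold equilibrium. split.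
  - intros [Hy [Hw [Hf [Hz Hh]]]]. pose proof (sf_zero x y Hy Hf). subst x.
    repeat split; auto. apply (sh_axis_zero a y Ha Hy). exact Hh.
  - intros [Hx [Hw [Hz [Hy HG]]]]. subst x. repeat split; auto.
    + unfold sf. destruct (sa_sb_axis y Hy) as [E1 E2]. rewrite E1, E2. ring.
    + apply (sh_axis_zero a y Ha Hy). exact HG.
Qed.

Definition base_equilibrium (a : R) : pt := (0, 0, sqrt (tan a) / 3, 0).

Lemma base_height_pos a : 0 < a < PI/2 -> 0 < sqrt (tan a) / 3.
Proof.
  intro H. destruct (trig_quarter a H) as [[Hc _] Hs].
  assert (0 < sqrt (tan a)) by (apply sqrt_lt_R0; unfold tan; apply Rdiv_lt_0_compat; lra).
  lra.
Qed.

Lemma base_is_equilibrium a : 0 < a < PI/2 -> equilibrium a (base_equilibrium a).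
Proof.
  intro Ha. apply equilibrium_iff; auto.
  repeat split; auto using base_height_pos. rewrite secy_base; auto.
Qed.

Lemma equilibrium_centred a p : 0 < a < PI/2 -> equilibrium a p ->
  exists y, p = (0, 0, y, 0) /\ 0 < y /\ G (secy y) = G (/ cos a).
Proof.
  intros Ha Hp. destruct p as [[[x w] y] z].
  apply equilibrium_iff in Hp; auto. destruct Hp as [Hx [Hw [Hz [Hy HG]]]].
  subst. exists y. auto.
Qed.

Lemma sec_vs_peak a : 0 < a < PI/2 ->
  (a < alpha_star -> / cos a < cstar) /\ (alpha_star < a -> cstar < / cos a).
Proof.
  intro Ha. destruct alpha_star_spec as [Hs Ecs]. rewrite <- Ecs.
  split; intro; apply sec_lt; lra.
Qed.

(* At the peak, G(sec a) = G(cstar) is the maximal level: one equilibrium. *)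
Lemma equilibria_at_peak a : a = alpha_star -> exactly_one_equilibrium a.
Proof.
  intro E. destruct alpha_star_spec as [Hs Ecs]. subst a.
  exists (base_equilibrium alpha_star). split; [apply base_is_equilibrium; auto|].
  intros p Hp. destruct (equilibrium_centred alpha_star p Hs Hp) as [y [-> [Hy HG]]].
  rewrite Ecs in HG.
  pose proof (level_at_peak G_profile (secy y) ltac:(pose proof (secy_gt1 y Hy); lra) HG)
    as Hpeak.
  rewrite <- Ecs, <- (secy_base alpha_star Hs) in Hpeak.
  apply secy_inj in Hpeak; [|lra|pose proof (base_height_pos alpha_star Hs); lra].
  unfold base_equilibrium. rewrite Hpeak. reflexivity.
Qed.

(* Off the peak the level G(sec a) is attained at exactly two secants, one on
   each side of cstar; they give the base equilibrium and a second one, which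
   is higher below the peak and lower above it. *)
Lemma equilibria_off_peak a : 0 < a < PI/2 -> a <> alpha_star ->
  exists y1, equilibrium a (0, 0, y1, 0) /\
    (a < alpha_star -> sqrt (tan a) / 3 < y1) /\
    (alpha_star < a -> y1 < sqrt (tan a) / 3) /\
    forall p, equilibrium a p -> p = base_equilibrium a \/ p = (0, 0, y1, 0).
Proof.
  intros Ha Hne. pose proof (base_height_pos a Ha) as Hy0.
  pose proof (secy_base a Ha) as Ey0.
  destruct (sec_vs_peak a Ha) as [Hbelow Habove].
  assert (Hc0 : / cos a <> cstar).
  { intro E. destruct (Rtotal_order a alpha_star) as [H|[H|H]]; auto.
    - pose proof (Hbelow H); lra.
    - pose proof (Habove H); lra. }
  destruct (level_partner G_profile (/ cos a) (sec_gt1 a Ha) Hc0)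
    as [c1 [Hc1 [HG1 [Hleft Hright]]]].
  destruct (secy_surj c1 Hc1) as [y1 [Hy1 Ey1]].
  exists y1. split; [|split; [|split]].
  - apply equilibrium_iff; auto. repeat split; auto. rewrite Ey1. exact HG1.
  - intro H. apply secy_lt_rev; [lra | lra |]. rewrite Ey0, Ey1.
    pose proof (Hbelow H). pose proof (Hleft (Hbelow H)). lra.
  - intro H. apply secy_lt_rev; [lra | lra |]. rewrite Ey0, Ey1.
    pose proof (Habove H). pose proof (Hright (Habove H)). lra.
  - intros p Hp. destruct (equilibrium_centred a p Ha Hp) as [y [-> [Hy HG]]].
    pose proof (secy_gt1 y Hy) as Hsy. pose proof (sec_gt1 a Ha).
    assert (Hlevel : secy y = / cos a \/ secy y = c1).
    { destruct (Rlt_le_dec (/ cos a) cstar) as [Hl|Hr].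
      - apply (level_two_sides G_profile); auto; lra.
      - assert (Hr' : cstar < / cos a) by lra.
        destruct (level_two_sides G_profile c1 (/ cos a) (secy y)) as [E|E];
          auto; lra. }
    destruct Hlevel as [E|E].
    + left. rewrite <- Ey0 in E. apply secy_inj in E; try lra.
      unfold base_equilibrium. rewrite E. reflexivity.
    + right. rewrite <- Ey1 in E. apply secy_inj in E; try lra. rewrite E. reflexivity.
Qed.

Lemma two_equilibria_off_peak a : 0 < a < PI/2 -> a <> alpha_star ->
  exactly_two_equilibria a.
Proof.
  intros Ha Hne. destruct (equilibria_off_peak a Ha Hne) as [y1 [Hp1 [Hlo [Hhi Hall]]]].
  exists (base_equilibrium a), (0, 0, y1, 0). split; [|split; [|split]]; auto.
  - intro E. injection E as E.
    destruct (Rtotal_order a alpha_star) as [H|[H|H]]; [apply Hlo in H | | apply Hhi in H]; lra.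
  - apply base_is_equilibrium; auto.
Qed.

Lemma base_lower_below_peak a : 0 < a < PI/2 -> a < alpha_star ->
  forall p, equilibrium a p -> p <> base_equilibrium a -> sqrt (tan a) / 3 < ycoord p.
Proof.
  intros Ha H p Hp Hne.
  destruct (equilibria_off_peak a Ha ltac:(lra)) as [y1 [_ [Hlo [_ Hall]]]].
  destruct (Hall p Hp) as [E|E]; [contradiction|]. subst p. exact (Hlo H).
Qed.

Lemma base_higher_above_peak a : 0 < a < PI/2 -> alpha_star < a ->
  forall p, equilibrium a p -> p <> base_equilibrium a -> ycoord p < sqrt (tan a) / 3.
Proof.
  intros Ha H p Hp Hne.
  destruct (equilibria_off_peak a Ha ltac:(lra)) as [y1 [_ [_ [Hhi Hall]]]].
  destruct (Hall p Hp) as [E|E]; [contradiction|]. subst p. exact (Hhi H).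
Qed.

Theorem mainTheorem3 :
  (* q(alpha) -> 0 as alpha -> 0+ and as alpha -> (pi/2)- *)
  limit1_in q in_open_quarter 0 0 /\
  limit1_in q in_open_quarter 0 (PI/2) /\
  exists s : R,
    0 < s < PI/2 /\ unimodal_at s /\
    (forall s', 0 < s' < PI/2 -> unimodal_at s' -> s' = s) /\
    forall alpha0 : R, 0 < alpha0 < PI/2 ->
      (alpha0 <> s -> exactly_two_equilibria alpha0) /\
      (alpha0 = s -> exactly_one_equilibrium alpha0) /\
      (alpha0 < s ->
         equilibrium alpha0 (0, 0, sqrt (tan alpha0) / 3, 0) /\
         forall p, equilibrium alpha0 p -> p <> (0, 0, sqrt (tan alpha0) / 3, 0) ->
           sqrt (tan alpha0) / 3 < ycoord p) /\
      (s < alpha0 ->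
         equilibrium alpha0 (0, 0, sqrt (tan alpha0) / 3, 0) /\
         forall p, equilibrium alpha0 p -> p <> (0, 0, sqrt (tan alpha0) / 3, 0) ->
           ycoord p < sqrt (tan alpha0) / 3).
Proof.
  split; [exact q_lim_0|]. split; [exact q_lim_PI2|].
  destruct alpha_star_spec as [Hs _].
  exists alpha_star. split; [exact Hs|]. split; [exact q_unimodal|]. split.
  { intros s' Hs' Hu. exact (unimodal_unique alpha_star s' Hs Hs' q_unimodal Hu). }
  intros a Ha. split; [|split; [|split]].
  - exact (two_equilibria_off_peak a Ha).
  - exact (equilibria_at_peak a).
  - intro H. split; [exact (base_is_equilibrium a Ha)|].
    exact (base_lower_below_peak a Ha H).
  - intro H. split; [exact (base_is_equilibrium a Ha)|].
    exact (base_higher_above_peak a Ha H).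
Qed.
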